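(* Let $T$ be a lifted graph, $F\colon T\to T$ a continuous sun-like map of degree 1, ${\cal P}$ a basic partition of $F$ and ${\cal G}$ its covering graph. If $(A_n)_{n\ge0}$ is the itinerary of some point $x\in X^\infty$ and $\alpha_n:=A_0\dots A_n/\!\sim$, then $(\alpha_n)_{n\ge0}$ is an infinite path in ${\cal G}$. Conversely, if $(\alpha_n)_{n\ge0}$ is an infinite path in ${\cal G}$ with $H(\alpha_0)=k$, then there exists a point $x\in X^\infty$ whose itinerary $(A_n)_{n\ge0}$ satisfies $\alpha_n=A_0\dots A_{n+k}/\!\sim$ for all $n\ge0$.
   Context: A lifted graph is a connected topological space $T$ with a homeomorphism $h\colon\mathbb R\to h(\mathbb R)\subset T$ and a homeomorphism $\tau\colon T\to T$ such that $\tau(h(x))=h(x+1)$, the closure of each connected component of $T\setminus h(\mathbb R)$ is a topological finite graph meeting $h(\mathbb R)$ in exactly one point, and only finitely many such components have closure meeting $h([0,1])$. Identify $h(\mathbb R)$ with $\mathbb R$, write $x+m:=\tau^m(x)$; $r_{\mathbb R}\colon T\to\mathbb R$ is the identity on $\mathbb R$ and maps a component $C$ of $T\setminus\mathbb R$ to the point $\overline C\cap\mathbb R$. $F$ has degree 1 if $F(x+1)=F(x)+1$. Let $T_{\mathbb R}:=\overline{\bigcup_{n\ge0}F^n(\mathbb R)}$, $X:=\overline{T\setminus T_{\mathbb R}}\cap r_{\mathbb R}^{-1}([0,1))$. $F$ is sun-like if $(T\setminus T_{\mathbb R})\cap r_{\mathbb R}^{-1}([0,1))$ consists of finitely many intervals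 with pairwise disjoint closures $X^i$, $i\in\Lambda$ (branches), each a compact interval meeting $T_{\mathbb R}$ in one endpoint $\min X^i$ (fixing the order of $X^i$). $X^\infty:=\{x\in X:F^n(x)\in X+\mathbb Z\ \forall n\ge0\}$. A basic partition is a finite family ${\cal P}=\{X^i_j\}$ of pairwise disjoint nonempty compact intervals $X^i_1<\dots<X^i_{N_i}$ in $X^i$, with $\ell(X^i_j)\in\Lambda$, $p(X^i_j)\in\mathbb Z$, such that $F(X^i_j)\subset(X^{\ell(X^i_j)}+p(X^i_j))\cup\mathrm{Int}(T_{\mathbb R})$, $F(\min X^i_j)=\min X^{\ell(X^i_j)}+p(X^i_j)$, and $F(X\setminus\bigcup X^i_j)\cap(X+\mathbb Z)=\emptyset$. For $x\in X^\infty$ and each $n\ge0$ there is a unique $A_n\in{\cal P}$ with $F^n(x)\in A_n+\mathbb Z$; $(A_n)_{n\ge0}$ is the itinerary of $x$. For $A_0,\dots,A_n\in{\cal P}$, $\langle A_0\dots A_n\rangle:=F^n(\{x\in T: F^i(x)\in A_i+\mathbb Z,\ 0\le i\le n\})\cap X$. $A_0\dots A_n\sim B_0\dots B_m$ iff for some $k\le\min(n,m)$, $A_{n-i}=B_{m-i}$ ($0\le i\le k$) and $\langle A_0\dots A_{n-k}\rangle=A_{n-k}=B_{m-k}=\langle B_0\dots B_{m-k}\rangle$. The covering graph ${\cal G}$: vertices are classes $A_0\dots A_n/\!\sim$ with $\langle A_0\dots A_n\rangle\ne\emptyset$; arrow $\alpha\to\beta$ iff $\alpha=A_0\dots A_n/\!\sim$,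 $\beta=A_0\dots A_nA_{n+1}/\!\sim$ for some $A_i\in{\cal P}$. An infinite path is a sequence of vertices $(\alpha_n)$ with $\alpha_n\to\alpha_{n+1}$ for all $n$. The significant part of $A_0\dots A_n$ is $A_i\dots A_n$ with $i$ largest such that $A_0\dots A_n\sim A_i\dots A_n$; the height of its class is $H:=n-i$. *)

From HB Require Import structures.
From mathcomp Require Import all_boot all_order all_algebra.
From mathcomp Require Import all_classical all_reals topology normedtype.
From Stdlib Require Import Relations.
Set Implicit Arguments. Unset Strict Implicit. Unset Printing Implicit Defensive.
Import Order.TTheory GRing.Theory Num.Theory.
Import numFieldNormedType.Exports.
Local Open Scope classical_set_scope.
Local Open Scope ring_scope.

Section LiftedGraphs.
Context {R : realType} {T : topologicalType}.

Definition I01 : set R := [set t | 0 <= t <= 1].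
Definition I01o : set R := [set t | 0 <= t < 1].

(** [f] restricted to [A] is a homeomorphism onto its image (subspace topologies) *)
Definition embedding_on {Y : topologicalType} (A : set R) (f : R -> Y) :=
  [/\ {in A &, injective f},
      (forall V : set Y, open V -> exists U : set R, open U /\ A `&` f @^-1` V = A `&` U) &
      (forall U : set R, open U -> exists V : set Y, open V /\ f @` (A `&` U) = f @` A `&` V)].

Definition topological_finite_graph (G : set T) :=
  exists (V : seq T) (E : seq (R -> T)),
    [/\ G = [set` V] `|` \bigcup_(e in [set` E]) (e @` I01),
        (forall e, e \in E -> embedding_on I01 e /\ (e 0 \in V) /\ (e 1 \in V)),
        (forall e t, e \in E -> 0 < t < 1 -> e t \notin V) &
        (forall i j (e1 e2 : R -> T), onth E i = Some e1 -> onth E j = Some e2 ->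
           i <> j -> forall t s, 0 < t < 1 -> 0 < s < 1 -> e1 t <> e2 s)].

Variables (h : R -> T) (tau tauinv : T -> T).

Definition hR : set T := range h.

Definition lifted_graph :=
  [/\ connected [set: T],
      embedding_on [set: R] h,
      [/\ cancel tau tauinv, cancel tauinv tau, continuous tau & continuous tauinv] /\
      (forall x, tau (h x) = h (x + 1)),
      (forall x, ~ hR x ->
         topological_finite_graph (closure (connected_component (~` hR) x)) /\
         exists y, closure (connected_component (~` hR) x) `&` hR = [set y]) &
      finite_set [set C : set T | exists2 x, ~ hR x &
          C = connected_component (~` hR) x /\
          closure C `&` (h @` I01) !=set0]].

(** x + m := tau^m x *)
Definition trans (m : int) (x : T) : T :=
  match m with Posz n => iter n tau x | Negz n => iter n.+1 tauinv x end.

Definition addZ (A : set T) : set T := [set z | exists (m : int) (y : T), A y /\ z = trans m y].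

Definition rR (x : T) : T :=
  if `[< hR x >] then x
  else xget x (closure (connected_component (~` hR) x) `&` hR).

Variable F : T -> T.

Definition degree_one := forall x, F (tau x) = tau (F x).

Definition TR : set T := closure (\bigcup_(n in [set: nat]) (iter n F @` hR)).

Definition Xset : set T := closure (~` TR) `&` rR @^-1` (h @` I01o).

(** sun-like: the branches X^i are the arcs [gam i @` I01], indexed by the
    finite type [L] (= Lambda), oriented so that [gam i 0] = min X^i. *)
Variables (L : finType) (gam : L -> R -> T).

Definition branch (i : L) : set T := gam i @` I01.

Definition sun_like :=
  let S := ~` TR `&` rR @^-1` (h @` I01o) in
  [/\ (forall i, embedding_on I01 (gam i)),
      S `<=` \bigcup_(i in [set: L]) branch i,
      (forall i, connected (S `&` branch i) /\ closure (S `&` branch i) = branch i),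
      (forall i j, i != j -> branch i `&` branch j = set0) &
      (forall i, branch i `&` TR = [set gam i 0])].

Definition XZ : set T := addZ Xset.

Definition Xinf : set T := [set x | Xset x /\ forall n, XZ (iter n F x)].

Variables (P : finType) (br : P -> L) (lo hi : P -> R) (ell : P -> L) (pp : P -> int).

Definition piece (A : P) : set T := gam (br A) @` [set t | lo A <= t <= hi A].

Definition basic_partition :=
  [/\ (forall A, 0 <= lo A /\ lo A <= hi A /\ hi A <= 1),
      (forall A B, A != B -> piece A `&` piece B = set0),
      (forall A, F @` piece A `<=`
                 (trans (pp A) @` branch (ell A)) `|` interior TR),
      (forall A, F (gam (br A) (lo A)) = trans (pp A) (gam (ell A) 0)) &
      F @` (Xset `\` \bigcup_(A in [set: P]) piece A) `&` XZ = set0].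

Definition itinerary (x : T) (As : nat -> P) := forall n, addZ (piece (As n)) (iter n F x).

Definition bracket (w : seq P) : set T :=
  (iter (size w).-1 F @`
     [set y | forall i c, onth w i = Some c -> addZ (piece c) (iter i F y)])
  `&` Xset.

Definition sim (v w : seq P) :=
  (0 < size v)%N /\ (0 < size w)%N /\
  let n := (size v).-1 in let m := (size w).-1 in
  exists k, (k <= minn n m)%N /\
    (forall i, (i <= k)%N -> onth v (n - i) = onth w (m - i)) /\
    exists c, onth v (n - k) = Some c /\
      bracket (take (n - k).+1 v) = piece c /\
      bracket (take (m - k).+1 w) = piece c.

(** equivalence class of a word (equivalence closure of ~, which the paper
    asserts is an equivalence relation) *)
Definition wclass (w : seq P) : set (seq P) :=
  [set v | clos_refl_sym_trans (seq P) sim w v].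

Definition vertex (a : set (seq P)) :=
  exists w, (0 < size w)%N /\ bracket w !=set0 /\ a = wclass w.

Definition arrow (a b : set (seq P)) :=
  vertex a /\ vertex b /\
  exists w c, (0 < size w)%N /\ a = wclass w /\ b = wclass (rcons w c).

Definition infinite_path (a : nat -> set (seq P)) := forall n, arrow (a n) (a n.+1).

Definition height (w : seq P) (k : nat) :=
  exists i, (i < size w)%N /\ k = ((size w).-1 - i)%N /\ sim w (drop i w) /\
    forall j, (i < j < size w)%N -> ~ sim w (drop j w).

End LiftedGraphs.

From HB Require Import structures.
From mathcomp Require Import all_boot all_order all_algebra.
From mathcomp Require Import all_classical all_reals topology normedtype.
From mathcomp Require Import zify lra.
From Stdlib Require Import Relations.
Import Order.TTheory GRing.Theory Num.Theory.
Import numFieldNormedType.Exports.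
Local Open Scope classical_set_scope.
Local Open Scope ring_scope.
Set Implicit Arguments. Unset Strict Implicit. Unset Printing Implicit Defensive.

(* The forward direction is bookkeeping: F^n(x), translated back into X, lies
   in <A_0 ... A_n>, and appending a letter to a word is an arrow.
   For the converse, choosing successors along the path spells out letters
   A_0, A_1, ... with alpha_n the class of A_0 ... A_(n+k); since ~ preserves
   the Z-saturation F^n {y | F^i y in A_i + Z} of the bracket, all these
   saturated brackets are nonempty. The parameters t of the branch through A_0
   whose orbit follows A_0 ... A_n then form a decreasing sequence of nonempty
   compact sets, and any common point has itinerary (A_n). Closedness is the
   heart of the matter: by the basic partition, F maps a piece A into
   p(A) + X^(ell A) or into the interior of T_R; that interior is open and
   avoided by X + Z, so the points following the itinerary and their
   limits are both mapped into p(A) + X^(ell A), and the limit stays in the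
   next piece because the branches are embedded arcs. *)

Lemma int_ind_addsub (Q : int -> Prop) : Q 0 -> (forall m, Q m -> Q (m + 1)) ->
  (forall m, Q m -> Q (m - 1)) -> forall m, Q m.
Proof.
move=> Q0 QS QP; elim/int_rect => // n; first by rewrite -addn1 PoszD; exact: QS.
by rewrite -addn1 PoszD opprD; exact: QP.
Qed.

Lemma continuous_iter (T : topologicalType) (f : T -> T) n :
  continuous f -> continuous (iter n f).
Proof.
move=> cf; elim: n => [|n IH] x; first exact: cvg_id.
exact: (continuous_comp (IH x) (cf (iter n f x))).
Qed.

Section Translations.
Context {T : topologicalType} (tau tauinv : T -> T).
Hypotheses (tauK : cancel tau tauinv) (tauinvK : cancel tauinv tau).
Local Notation trans := (trans tau tauinv).

Lemma trans_addS m x : trans (m + 1) x = tau (trans m x).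
Proof.
case: m => [n|[|n]]; first by rewrite -PoszD addn1.
  by rewrite /= tauinvK.
have -> : Negz n.+1 + 1 = Negz n by rewrite !NegzE; lia.
by rewrite /= tauinvK.
Qed.

Lemma trans_subS m x : trans (m - 1) x = tauinv (trans m x).
Proof. by rewrite -[in RHS](subrK 1 m) trans_addS tauK. Qed.

Lemma trans_add m n x : trans (m + n) x = trans m (trans n x).
Proof.
elim/int_ind_addsub: m => [|m IH|m IH]; first by rewrite add0r.
  by rewrite addrAC !trans_addS IH.
by rewrite addrAC !trans_subS IH.
Qed.

Lemma transK m : cancel (trans m) (trans (- m)).
Proof. by move=> x; rewrite -trans_add addNr. Qed.

Lemma trans_morph (f : T -> T) : (forall x, f (tau x) = tau (f x)) ->
  forall m x, f (trans m x) = trans m (f x).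
Proof.
move=> ftau; have ftauinv y : f (tauinv y) = tauinv (f y).
  by rewrite -{2}(tauinvK y) ftau tauK.
elim/int_ind_addsub => [//|m IH|m IH] x.
  by rewrite !trans_addS ftau IH.
by rewrite !trans_subS ftauinv IH.
Qed.

Lemma iter_trans (f : T -> T) : (forall x, f (tau x) = tau (f x)) ->
  forall n m x, iter n f (trans m x) = trans m (iter n f x).
Proof. by move=> ftau n m x; elim: n => //= n ->; exact: trans_morph. Qed.

Lemma trans_line (R : realType) (h : R -> T) : (forall s, tau (h s) = h (s + 1)) ->
  forall m s, trans m (h s) = h (s + m%:~R).
Proof.
move=> htau; elim/int_ind_addsub => [|m IH|m IH] s; first by rewrite addr0.
  by rewrite trans_addS IH htau intrD addrA.
rewrite trans_subS IH intrB addrA.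
by rewrite -[in LHS](subrK 1 (s + m%:~R)) -htau tauK.
Qed.

Lemma addZ_trans A m z : addZ tau tauinv A z -> addZ tau tauinv A (trans m z).
Proof. by move=> [n [y [Ay ->]]]; exists (m + n), y; rewrite trans_add. Qed.

Lemma trans_continuous : continuous tau -> continuous tauinv -> forall m, continuous (trans m).
Proof. by move=> ct ci [n|n]; exact: continuous_iter. Qed.

End Translations.

Section Onth.
Context {X : Type}.
Implicit Types (s : seq X) (x : X).

Lemma onth_rcons s x i :
  onth (rcons s x) i = if (i < size s)%N then onth s i else if i == size s then Some x else None.
Proof.
rewrite -cats1 onth_cat; case: ltnP => // si.
by case: eqP => [->|ne]; rewrite ?subnn // onth_default //=; lia.
Qed.

Lemma onth_take s n i : (i < n)%N -> onth (take n s) i = onth s i.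
Proof. by elim: s n i => [|y s IH] [|n] [|i] //= ?; exact: IH. Qed.

Lemma take_onth s n x : onth s n = Some x -> take n.+1 s = rcons (take n s) x.
Proof.
move=> sn; have ns : (n < size s)%N by rewrite -onthTE sn.
by rewrite (take_nth x ns) (onth_nth x x s n sn).
Qed.

Lemma onth_mkseq (f : nat -> X) n i :
  onth (mkseq f n) i = if (i < n)%N then Some (f i) else None.
Proof.
case: ltnP => ni; last by rewrite onth_default // size_mkseq.
by rewrite onthE (nth_map (f 0%N)) ?size_mkseq // nth_mkseq.
Qed.

End Onth.

Section EquivalenceClosure.
Context {A : Type} (r : relation A).

Lemma crst_map (f : A -> A) : (forall x y, r x y -> r (f x) (f y)) ->
  forall x y, clos_refl_sym_trans A r x y -> clos_refl_sym_trans A r (f x) (f y).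
Proof.
move=> fr x y; elim=> [u v /fr|u|u v _|u v w _ uv _ vw]; first exact: rst_step.
- exact: rst_refl.
- exact: rst_sym.
- exact: rst_trans uv vw.
Qed.

Lemma crst_invariant (B : Type) (g : A -> B) : (forall x y, r x y -> g x = g y) ->
  forall x y, clos_refl_sym_trans A r x y -> g x = g y.
Proof. by move=> gr x y; elim=> [u v /gr|u|u v _ ->|u v w _ -> _ ->]. Qed.

Lemma eq_crst_class x y :
  clos_refl_sym_trans A r x = clos_refl_sym_trans A r y <-> clos_refl_sym_trans A r x y.
Proof.
split=> [->|xy]; first exact: rst_refl.
apply/funext => z; apply/propext; split => [xz|yz]; last exact: rst_trans yz.
by apply: rst_trans xz; exact: rst_sym.
Qed.

End EquivalenceClosure.

Lemma image_closure_sub (T U : topologicalType) (f : T -> U) (B : set T) :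
  continuous f -> f @` closure B `<=` closure (f @` B).
Proof.
move=> cf _ [y clBy <-] W /cf /clBy [u [Bu Wfu]].
by exists (f u); split => //; exists u.
Qed.

Lemma image_connected_component_sub (T U : topologicalType) (f : T -> U) (A : set T) (B : set U) x :
  continuous f -> (forall y, A y -> B (f y)) ->
  f @` connected_component A x `<=` connected_component B (f x).
Proof.
move=> cf fAB; have [Ax|nAx] := pselect (A x); last first.
  by rewrite connected_component_out // image_set0.
apply: connected_component_max.
- by exists x => //; exact: connected_component_refl.
- by move=> _ [y /connected_component_sub Ay <-]; exact: fAB.
- apply: connected_continuous_connected; first exact: component_connected.
  exact: continuous_subspaceT.
Qed.

Section Homeomorphisms.
Context {T U : topologicalType} (f : T -> U) (g : U -> T).
Hypotheses (fK : cancel f g) (gK : cancel g f) (cf : continuous f) (cg : continuous g).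

Lemma closure_homeo_image (B : set T) : closure (f @` B) = f @` closure B.
Proof.
apply/seteqP; split => [z clz|]; last exact: image_closure_sub.
exists (g z); last by rewrite gK.
have /(image_closure_sub cg) : (g @` closure (f @` B)) (g z) by exists z.
by rewrite image_comp (_ : g \o f = id) ?image_id //; apply/funext => y /=; rewrite fK.
Qed.

Lemma connected_component_homeo_image (A : set T) (B : set U) x :
  (forall y, A y -> B (f y)) -> (forall y, B y -> A (g y)) ->
  connected_component B (f x) = f @` connected_component A x.
Proof.
move=> fAB gBA; apply/seteqP; split => [z cz|]; last exact: image_connected_component_sub.
exists (g z); last by rewrite gK.
have : (g @` connected_component B (f x)) (g z) by exists z.
by move/(image_connected_component_sub cg gBA); rewrite fK.
Qed.

End Homeomorphisms.

Section Embeddings.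
Context {R : realType} {T : topologicalType} (g : R -> T).
Hypothesis g_emb : embedding_on I01 g.

Lemma embedding_nbhs t : I01 t -> forall W, nbhs (g t) W ->
  exists2 U, nbhs t U & forall t', U t' -> I01 t' -> W (g t').
Proof.
case: g_emb => _ pre _ It W; rewrite nbhsE => -[B [oB Bgt] BW].
have [U [oU E]] := pre B oB.
have Ut : U t by have : (I01 `&` g @^-1` B) t by []; rewrite E => -[].
exists U; first exact: open_nbhs_nbhs.
by move=> t' Ut' It'; apply: BW; have : (I01 `&` U) t' by []; rewrite -E => -[].
Qed.

Lemma embedding_continuous (A : set R) : A `<=` I01 -> {within A, continuous g}.
Proof.
move=> AI; apply/subspace_continuousP => x Ax W /= Wn.
have [U Un UW] := embedding_nbhs (AI _ Ax) Wn.
by apply: filterS Un => y Uy Ay; exact: UW _ Uy (AI _ Ay).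
Qed.

(* [T] need not be Hausdorff: a limit of points of an embedded arc is located
   through the parametrisation of the arc, not by uniqueness of limits. *)
Lemma embedding_cvg_closed {I : Type} (G : set_system I) {PG : ProperFilter G}
    (z : I -> T) (K : set R) s :
  closed K -> I01 s -> z @ G --> g s ->
  (\forall i \near G, (g @` (I01 `&` K)) (z i)) -> K s.
Proof.
case: g_emb => ginj _ img clK Is zs zK; apply/not_notP => nKs.
have [V [oV E]] := img _ (closed_openC clK).
have : (g @` (I01 `&` ~` K)) (g s) by exists s.
rewrite E => -[_ Vgs].
have [i [[u [Iu Ku] zi] Vzi]] := filter_ex (filterI zK (zs _ (open_nbhs_nbhs (conj oV Vgs)))).
have : (g @` I01 `&` V) (g u) by split; [exists u|rewrite zi].
rewrite -E => -[u' [Iu' nKu'] gu'].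
by apply: nKu'; rewrite (ginj _ _ (mem_set Iu') (mem_set Iu) gu').
Qed.

End Embeddings.

Lemma compact_nested_closed (T : ptopologicalType) (K : set T) (E : nat -> set T) :
  compact K -> (forall n, closed (E n)) -> (forall n, E n `<=` K) ->
  {homo E : m n / (m <= n)%N >-> n `<=` m} -> (forall n, E n !=set0) ->
  \bigcap_n E n !=set0.
Proof.
move=> cK clE EK Edecr Ene; move: cK; rewrite compact_In0 => /(_ _ setT E); apply.
  by exists E => // n _; rewrite setIidr.
move=> D' _; have [x Ex] := Ene (\max_(i <- finmap.enum_fset D') i)%N.
by exists x => i /= iD'; apply: Edecr Ex; exact: leq_bigmax_seq.
Qed.

Lemma closed_segment (R : realType) (a b : R) : closed [set x | a <= x <= b].
Proof.
rewrite (_ : [set x | _] = [set` `[a, b]]); first exact: itv_closed.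
by apply/seteqP; split => x /=; rewrite in_itv.
Qed.

Section Cylinders.
Context {R : realType} {T : topologicalType} (h : R -> T) (tau tauinv F : T -> T)
  (L : finType) (gam : L -> R -> T) (P : finType) (br : P -> L) (lo hi : P -> R).
Hypotheses (tauK : cancel tau tauinv) (tauinvK : cancel tauinv tau) (dF : degree_one tau F).

Local Notation trans := (trans tau tauinv).
Local Notation addZ := (addZ tau tauinv).
Local Notation piece := (piece gam br lo hi).
Local Notation bracket := (bracket h tau tauinv F gam br lo hi).
Local Notation sim := (sim h tau tauinv F gam br lo hi).
Local Notation crst := (clos_refl_sym_trans (seq P) sim).
Local Notation wclass := (wclass h tau tauinv F gam br lo hi).
Local Notation infinite_path := (infinite_path h tau tauinv F gam br lo hi).
Local Notation itinerary := (itinerary tau tauinv F gam br lo hi).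

Definition cylinder (w : seq P) : set T :=
  [set y | forall i c, onth w i = Some c -> addZ (piece c) (iter i F y)].

(* [bracket w = cylinder_image w `&` Xset], and unlike the bracket,
   [cylinder_image w] is invariant under integer translations. *)
Definition cylinder_image (w : seq P) : set T := iter (size w).-1 F @` cylinder w.

Lemma cylinder_trans w m y : cylinder w y -> cylinder w (trans m y).
Proof. by move=> wy i c wi; rewrite iter_trans //; exact/addZ_trans/(wy i c wi). Qed.

Lemma cylinder_image_trans w m z : cylinder_image w z -> cylinder_image w (trans m z).
Proof.
move=> [y wy <-]; exists (trans m y); first exact: cylinder_trans.
by rewrite iter_trans.
Qed.

Lemma cylinder_image_rcons u c : (0 < size u)%N ->
  cylinder_image (rcons u c) = F @` cylinder_image u `&` addZ (piece c).
Proof.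
move=> su; rewrite /cylinder_image size_rcons /=; apply/seteqP; split => z.
- move=> [y uy <-]; split; last by apply: uy; rewrite onth_rcons ltnn eqxx.
  exists (iter (size u).-1 F y); last by rewrite -iterS prednK.
  exists y => // i d ui; apply: uy; rewrite onth_rcons.
  by rewrite ifT ?ui // -onthTE ui.
- move=> [[_ [y uy <-] <-] cz]; exists y; last by rewrite -iterS prednK.
  move=> i d; rewrite onth_rcons; case: ltnP => [|_]; first by move=> _; exact: uy.
  by case: eqP => // -> [<-]; rewrite -[in X in addZ _ X](prednK su).
Qed.

Lemma cylinder_image_last w c :
  onth w (size w).-1 = Some c -> cylinder_image w `<=` addZ (piece c).
Proof. by move=> wc z [y wy <-]; exact: wy. Qed.

Lemma cylinder_image_bracket_piece w c : onth w (size w).-1 = Some c ->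
  bracket w = piece c -> cylinder_image w = addZ (piece c).
Proof.
move=> wc wE; apply/seteqP; split => [|z [m [y [cy ->]]]]; first exact: cylinder_image_last.
by apply: cylinder_image_trans; move: cy; rewrite -wE => -[].
Qed.

Lemma cylinder_image_extend v w a b d : (0 < a)%N -> (0 < b)%N ->
  (a + d <= size v)%N -> (b + d <= size w)%N ->
  (forall j, (j < d)%N -> onth v (a + j) = onth w (b + j)) ->
  cylinder_image (take a v) = cylinder_image (take b w) ->
  cylinder_image (take (a + d) v) = cylinder_image (take (b + d) w).
Proof.
move=> a0 b0; elim: d => [|d IH] adv bdw vw; rewrite ?addn0 // => base.
have : (a + d < size v)%N by rewrite addnS in adv.
rewrite -onthTE; case vad: (onth v (a + d)) => [c|] // _.
have wbd : onth w (b + d) = Some c by rewrite -vw.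
have IHd : cylinder_image (take (a + d) v) = cylinder_image (take (b + d) w).
  by apply: IH => //; [lia | lia | move=> j jd; apply: vw; exact: ltnW].
rewrite !addnS (take_onth vad) (take_onth wbd) !cylinder_image_rcons ?IHd //.
  by rewrite size_takel; lia.
by rewrite size_takel; lia.
Qed.

Lemma sim_cylinder_image v w : sim v w -> cylinder_image v = cylinder_image w.
Proof.
(* Both words end with the same k + 1 letters, and at the first of these both
   prefixes have the full piece as bracket, hence the same saturation. *)
move=> [sv [sw]] /=; set n := (size v).-1; set m := (size w).-1.
move=> [k [kmin [vw [c [vc [bv bw]]]]]].
have [kn km] : (k <= n)%N /\ (k <= m)%N by move: kmin; rewrite leq_min => /andP.
have vn : size v = n.+1 by rewrite /n prednK.
have wm : size w = m.+1 by rewrite /m prednK.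
have wc : onth w (m - k) = Some c by rewrite -vw.
have last_c u j : onth u j = Some c -> onth (take j.+1 u) (size (take j.+1 u)).-1 = Some c.
  move=> uj; have ju : (j < size u)%N by rewrite -onthTE uj.
  by rewrite size_takel // onth_take.
rewrite -(take_size v) -(take_size w) vn wm.
rewrite -[n.+1](@subnK k) -1?[m.+1](@subnK k); try lia.
apply: cylinder_image_extend; try lia.
  move=> j jk; have := vw (k - j.+1)%N (leq_subr _ _).
  have -> : (n - (k - j.+1) = n.+1 - k + j)%N by lia.
  by have -> : (m - (k - j.+1) = m.+1 - k + j)%N by lia.
rewrite !subSn // (cylinder_image_bracket_piece (last_c _ _ vc)) //.
by rewrite (cylinder_image_bracket_piece (last_c _ _ wc)).
Qed.

Lemma crst_cylinder_image v w : crst v w -> cylinder_image v = cylinder_image w.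
Proof. exact: crst_invariant sim_cylinder_image v w. Qed.

Lemma sim_rcons c v w : sim v w -> sim (rcons v c) (rcons w c).
Proof.
move=> [sv [sw]] /=; set n := (size v).-1; set m := (size w).-1.
move=> [k [kmin [vw [d [vd [bv bw]]]]]].
have vn : size v = n.+1 by rewrite /n prednK.
have wm : size w = m.+1 by rewrite /m prednK.
have [kn km] : (k <= n)%N /\ (k <= m)%N by move: kmin; rewrite leq_min => /andP.
rewrite /sim !size_rcons /=; do 2 split => //.
exists k.+1; rewrite vn wm /=; split; first by rewrite leq_min; lia.
split=> [i ik|].
- rewrite !onth_rcons vn wm; case: i ik => [|i] ik; first by rewrite !subn0 !ltnn !eqxx.
  rewrite !subSS.
  have -> : (n - i < n.+1)%N by lia.
  have -> : (m - i < m.+1)%N by lia.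
  exact: vw.
- exists d; rewrite !subSS onth_rcons vn.
  have -> : (n - k < n.+1)%N by lia.
  by rewrite -!cats1 !takel_cat ?vn ?wm; first split => //; lia.
Qed.

Lemma crst_rcons c v w : crst v w -> crst (rcons v c) (rcons w c).
Proof. by apply: (crst_map (f := fun u => rcons u c)) => x y; exact: sim_rcons. Qed.

Lemma eq_wclass v w : wclass v = wclass w <-> crst v w.
Proof. exact: eq_crst_class. Qed.

Lemma itinerary_cylinder x As n : itinerary x As -> cylinder (mkseq As n) x.
Proof. by move=> xAs i c; rewrite onth_mkseq; case: ltnP => // _ [<-]; exact: xAs. Qed.

Lemma itinerary_infinite_path x As : Xinf h tau tauinv F x -> itinerary x As ->
  infinite_path (fun n => wclass (mkseq As n.+1)).
Proof.
move=> [Xx XZx] xAs.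
have V n : vertex h tau tauinv F gam br lo hi (wclass (mkseq As n.+1)).
  exists (mkseq As n.+1); rewrite size_mkseq; split => //; split => //.
  have [m [y [Xy E]]] := XZx n; exists y; split => //.
  exists (trans (- m) x); first exact/cylinder_trans/itinerary_cylinder.
  by rewrite size_mkseq /= iter_trans // E transK.
move=> n; do 2 split => //.
by exists (mkseq As n.+1), (As n.+1); rewrite size_mkseq -mkseqS.
Qed.

Lemma infinite_path_cylinder_image a n w :
  infinite_path a -> a n = wclass w -> cylinder_image w !=set0.
Proof.
move=> pa anw; have [[v [_ [[z [[y vy yz] _]] anv]]] _] := pa n.
have vw : crst v w by apply/eq_wclass; rewrite -anv.
by rewrite -(crst_cylinder_image vw); exists z, y.
Qed.

Lemma infinite_path_words a v : infinite_path a -> a 0%N = wclass v -> (0 < size v)%N ->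
  exists As : nat -> P, forall n, a n = wclass (mkseq As (n + (size v).-1).+1).
Proof.
move=> pa a0 sv; have [succ succP] := choice (fun n => (pa n).2.2).
have [c cP] := choice succP.
pose As j := if (j < size v)%N then nth (c 0%N) v j else c (j - size v)%N.
exists As; elim=> [|n IH].
  rewrite add0n prednK // a0; congr wclass.
  apply: (@eq_from_nth _ (c 0%N)) => [|j jv]; first by rewrite size_mkseq.
  by rewrite nth_mkseq // /As jv.
have [_ [an an1]] := cP n.
have Asn : As (n + (size v).-1).+1 = c n.
  by rewrite /As -addnS prednK // ltnNge leq_addl /= addnK.
by rewrite an1 addSn mkseqS Asn; apply/eq_wclass/crst_rcons/eq_wclass; rewrite -an IH.
Qed.

End Cylinders.

Section LiftedGraph.
Context {R : realType} {T : topologicalType} (h : R -> T) (tau tauinv F : T -> T)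
  (L : finType) (gam : L -> R -> T).
Hypotheses (lg : lifted_graph h tau tauinv) (dF : degree_one tau F) (sl : sun_like h F gam).

Local Notation trans := (trans tau tauinv).
Local Notation hR := (hR h).
Local Notation rR := (rR h).
Local Notation TR := (TR h F).
Local Notation Xset := (Xset h F).
Local Notation XZ := (XZ h tau tauinv F).
Local Notation branch := (branch gam).

Let tauK : cancel tau tauinv. Proof. by case: lg => _ _ [[]]. Qed.
Let tauinvK : cancel tauinv tau. Proof. by case: lg => _ _ [[]]. Qed.
Let tau_cont : continuous tau. Proof. by case: lg => _ _ [[]]. Qed.
Let tauinv_cont : continuous tauinv. Proof. by case: lg => _ _ [[]]. Qed.
Let tau_h s : tau (h s) = h (s + 1). Proof. by case: lg => _ _ []. Qed.

Lemma hR_tau x : hR x -> hR (tau x).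
Proof. by move=> [s _ <-]; exists (s + 1). Qed.

Lemma hR_tauinv x : hR x -> hR (tauinv x).
Proof. by move=> [s _ <-]; exists (s - 1) => //; rewrite -[in RHS](subrK 1 s) -tau_h tauK. Qed.

Lemma rR_hR x : hR x -> rR x = x.
Proof. by move=> hx; rewrite /rR asboolT. Qed.

Lemma rR_foot x y : ~ hR x ->
  closure (connected_component (~` hR) x) `&` hR = [set y] -> rR x = y.
Proof.
move=> nx E; rewrite /rR asboolF //; apply: xget_unique; first by rewrite E.
by move=> z; rewrite E.
Qed.

Lemma rR_connected_component x x' : ~ hR x ->
  connected_component (~` hR) x x' -> rR x' = rR x.
Proof.
move=> nx xx'; have nx' : ~ hR x' := connected_component_sub xx'.
case: lg => _ _ _ /(_ x nx) [_ [y Ey]] _.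
by rewrite (rR_foot nx Ey); apply: rR_foot; rewrite // -(same_connected_component xx').
Qed.

Lemma rR_tau x : rR (tau x) = tau (rR x).
Proof.
have [hx|nx] := pselect (hR x); first by rewrite !rR_hR //; exact: hR_tau.
have ntau z : (~` hR) z -> (~` hR) (tau z) by move=> nz /hR_tauinv; rewrite tauK.
have ntauinv z : (~` hR) z -> (~` hR) (tauinv z) by move=> nz /hR_tau; rewrite tauinvK.
case: lg => _ _ _ /(_ x nx) [_ [y Ey]] _.
rewrite (rR_foot nx Ey); apply: rR_foot; first exact: ntau.
rewrite (connected_component_homeo_image tauK tauinvK tau_cont tauinv_cont x ntau ntauinv).
rewrite (closure_homeo_image tauK tauinvK tau_cont tauinv_cont); apply/seteqP; split.
- move=> _ [[w cw <-] /hR_tauinv]; rewrite tauK => hw.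
  have : [set y] w by rewrite -Ey.
  by move=> /= ->.
- move=> _ ->; have : [set y] y by [].
  by rewrite -Ey => -[cy hy]; split; [exists y|exact: hR_tau].
Qed.

Lemma rR_trans m x : rR (trans m x) = trans m (rR x).
Proof. exact: trans_morph rR_tau m x. Qed.

Lemma Xset_trans_eq0 m x : Xset x -> Xset (trans m x) -> m = 0.
Proof.
have hinj : {in [set: R] &, injective h} by case: lg => _ [].
move=> [_ [s s01 hs]] [_ [s' s'01 hs']].
rewrite rR_trans -hs trans_line // in hs'.
move: s01 s'01; rewrite /I01o /= (hinj _ _ (in_setT _) (in_setT _) hs').
move=> /andP[s0 s1] /andP[t0 t1].
have : m%:~R < 1 :> R by lra.
have : -1 < m%:~R :> R by lra.
rewrite -[1 : R]/(1%:~R) -[-1 : R]/((-1)%:~R) !ltr_int; lia.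
Qed.

Lemma hR_TR x : hR x -> TR x.
Proof. by move=> hx; apply: subset_closure; exists 0%N => //; exists x. Qed.

Lemma TR_trans m y : TR y -> TR (trans m y).
Proof.
move=> Ty W /(trans_continuous tau_cont tauinv_cont).
move=> /Ty [_ [[n _ [_ [s _ <-] <-]] Wu]].
exists (trans m (iter n F (h s))); split => //.
exists n => //; exists (h (s + m%:~R)); first by exists (s + m%:~R).
by rewrite -(trans_line tauK tauinvK tau_h) iter_trans.
Qed.

Lemma XZ_not_interior_TR z : XZ z -> ~ TR° z.
Proof.
move=> [m [y [[clCy _] ->]]] /(trans_continuous tau_cont tauinv_cont) TRy.
have : TR° y.
  apply: (@filterS _ _ _ (trans m @^-1` TR)) TRy => u /= /(TR_trans (m := - m)).
  by rewrite transK.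
by move: clCy; rewrite closure_setC.
Qed.

Let gam_emb i : embedding_on I01 (gam i). Proof. by case: sl. Qed.
Let branch_closure i :
  closure ((~` TR `&` rR @^-1` (h @` I01o)) `&` branch i) = branch i.
Proof. by case: sl => _ _ /(_ i) []. Qed.
Let branch_TR i : branch i `&` TR = [set gam i 0]. Proof. by case: sl. Qed.

Lemma I01_0 : I01 (0 : R). Proof. by rewrite /I01 /= lexx ler01. Qed.
Lemma I01_1 : I01 (1 : R). Proof. by rewrite /I01 /= lexx ler01. Qed.

Lemma gam_notin_TR i t : I01 t -> t != 0 -> ~ TR (gam i t).
Proof.
move=> It t0 Tt; have : (branch i `&` TR) (gam i t) by split => //; exists t.
rewrite branch_TR => /= E; have [ginj _ _] := gam_emb i.
by move: t0; rewrite (ginj _ _ (mem_set It) (mem_set I01_0) E) eqxx.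
Qed.

Lemma gam_notin_hR i t : I01 t -> t != 0 -> ~ hR (gam i t).
Proof. by move=> It t0 /hR_TR; exact: gam_notin_TR. Qed.

Lemma gam1_notin_hR i : ~ hR (gam i 1).
Proof. by apply: gam_notin_hR I01_1 _; rewrite oner_eq0. Qed.

Lemma gam_connected_component i s : I01 s -> ~ hR (gam i s) ->
  connected_component (~` hR) (gam i 1) (gam i s).
Proof.
move=> Is ns; have [s0 s1] : 0 <= s /\ s <= 1 by move: Is => /andP.
have sI : `[s, 1] `<=` I01.
  by move=> t; rewrite /= in_itv /= => /andP[st t1]; apply/andP; split => //; exact: le_trans st.
suff : gam i @` `[s, 1] `<=` connected_component (~` hR) (gam i 1).
  by apply; exists s => //; rewrite /= in_itv /= lexx.
apply: connected_component_max.
- by exists 1 => //; rewrite /= in_itv /= lexx s1.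
- move=> _ [t st <-]; have [->//|ts] := eqVneq t s.
  apply: gam_notin_hR (sI _ st) _; move: st; rewrite /= in_itv /= => /andP[st _].
  by apply: contraNneq ts => t0; rewrite t0 in st *; apply/eqP; lra.
- apply: connected_continuous_connected; first exact: segment_connected.
  exact: embedding_continuous.
Qed.

Lemma rR_gam1 i : (h @` I01o) (rR (gam i 1)).
Proof.
have : closure ((~` TR `&` rR @^-1` (h @` I01o)) `&` branch i) (gam i 0).
  by rewrite branch_closure; exists 0 => //; exact: I01_0.
move=> cl0; have [z [[nTz Sz] [t It tz]]] :
    ((~` TR `&` rR @^-1` (h @` I01o)) `&` branch i) !=set0.
  by apply/set0P/negP => /eqP E; move: cl0; rewrite E closure0.
subst z.
have t0 : t != 0.
  apply: contra_notN nTz => /eqP ->.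
  by have : [set gam i 0] (gam i 0) by []; rewrite -branch_TR => -[].
have := gam_connected_component It (gam_notin_hR (i := i) It t0).
by move/(rR_connected_component (gam1_notin_hR (i := i))) <-.
Qed.

Lemma gam0_rR i : hR (gam i 0) -> gam i 0 = rR (gam i 1).
Proof.
move=> h0; have n1 := gam1_notin_hR (i := i).
have cl : closure (connected_component (~` hR) (gam i 1)) (gam i 0).
  move=> W /(embedding_nbhs (gam_emb i) I01_0) [U /nbhs_ballP [r r0 rU] UW].
  set t := Num.min (r / 2) 1.
  have t0 : 0 < t by rewrite lt_min ltr01 andbT divr_gt0.
  have It : I01 t by apply/andP; split; [exact: ltW|rewrite ge_min lexx orbT].
  exists (gam i t); split.
    by apply: (gam_connected_component It); apply: (gam_notin_hR (i := i) It); rewrite gt_eqF.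
  apply: UW It; apply: rU; rewrite /ball /= sub0r normrN gtr0_norm //.
  by rewrite gt_min ltr_pdivrMr // ltr_pMr // ltr1n.
case: lg => _ _ _ /(_ _ n1) [_ [y Ey]] _.
have : (closure (connected_component (~` hR) (gam i 1)) `&` hR) (gam i 0) by [].
by rewrite (rR_foot n1 Ey) Ey.
Qed.

Lemma branch_Xset i s : I01 s -> Xset (gam i s).
Proof.
move=> Is; split.
  have : branch i (gam i s) by exists s.
  by rewrite -branch_closure; apply: closureS => z [[]].
have [hs|ns] := pselect (hR (gam i s)).
  have s0 : s = 0 by apply/eqP/negPn/negP => s0; exact: (gam_notin_hR (i := i) Is s0 hs).
  by move: hs; rewrite s0 => hs; rewrite /preimage /= rR_hR // (gam0_rR hs); exact: rR_gam1.
have := gam_connected_component Is ns.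
move/(rR_connected_component (gam1_notin_hR (i := i))).
by rewrite /preimage /= => ->; exact: rR_gam1.
Qed.

End LiftedGraph.

Section Partition.
Context {R : realType} {T : topologicalType} (h : R -> T) (tau tauinv F : T -> T)
  (L : finType) (gam : L -> R -> T)
  (P : finType) (br : P -> L) (lo hi : P -> R) (ell : P -> L) (pp : P -> int).
Hypotheses (lg : lifted_graph h tau tauinv) (F_cont : continuous F) (dF : degree_one tau F)
  (sl : sun_like h F gam) (bp : basic_partition h tau tauinv F gam br lo hi ell pp).

Local Notation trans := (trans tau tauinv).
Local Notation addZ := (addZ tau tauinv).
Local Notation piece := (piece gam br lo hi).
Local Notation TR := (TR h F).
Local Notation Xset := (Xset h F).
Local Notation XZ := (XZ h tau tauinv F).
Local Notation branch := (branch gam).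
Local Notation cylinder := (cylinder tau tauinv F gam br lo hi).
Local Notation cylinder_image := (cylinder_image tau tauinv F gam br lo hi).

Let tauK : cancel tau tauinv. Proof. by case: lg => _ _ [[]]. Qed.
Let tauinvK : cancel tauinv tau. Proof. by case: lg => _ _ [[]]. Qed.
Let tau_cont : continuous tau. Proof. by case: lg => _ _ [[]]. Qed.
Let tauinv_cont : continuous tauinv. Proof. by case: lg => _ _ [[]]. Qed.
Let gam_emb i : embedding_on I01 (gam i). Proof. by case: sl. Qed.

Lemma piece_param_I01 c u : lo c <= u <= hi c -> I01 u.
Proof.
case: bp => /(_ c) [lo0 [_ hi1]] _ _ _ _ /andP[lou uhi].
by apply/andP; split; [exact: le_trans lou|exact: le_trans hi1].
Qed.

Lemma piece_Xset c : piece c `<=` Xset.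
Proof. by move=> _ [u cu <-]; exact: (branch_Xset lg sl _ (piece_param_I01 cu)). Qed.

Lemma addZ_piece_XZ c z : addZ (piece c) z -> XZ z.
Proof. by move=> [m [y [cy ->]]]; exists m, y; split => //; exact: piece_Xset cy. Qed.

Lemma F_piece A z : piece A z -> branch (ell A) (trans (- pp A) (F z)) \/ TR° (F z).
Proof.
case: bp => _ _ Fmap _ _ Az.
case: (Fmap A (F z) (ex_intro2 _ _ z Az erefl)) => [[y By <-]|]; last by right.
by left; rewrite transK.
Qed.

Lemma piece_step A B z : piece A z -> addZ (piece B) (F z) ->
  ell A = br B /\ piece B (trans (- pp A) (F z)).
Proof.
move=> Az BFz; have [[s Is Es]|] := F_piece Az; last first.
  by move/(XZ_not_interior_TR lg dF (addZ_piece_XZ BFz)).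
have [q [_ [[u Bu <-] Fz]]] := BFz.
have gEq : gam (ell A) s = trans (- pp A + q) (gam (br B) u) by rewrite trans_add // -Fz Es.
have q0 : - pp A + q = 0.
  apply: (Xset_trans_eq0 lg (piece_Xset (ex_intro2 _ _ u Bu erefl))).
  by rewrite -gEq; exact: (branch_Xset lg sl _ Is).
rewrite q0 /= in gEq; split; last by rewrite -Es gEq; exists u.
apply/eqP/negPn/negP => ne; case: sl => _ _ _ /(_ _ _ ne) disj _.
have : (branch (ell A) `&` branch (br B)) (gam (ell A) s).
  by split; [exists s|rewrite gEq; exists u => //; exact: piece_param_I01 Bu].
by rewrite disj.
Qed.

Lemma piece_step_cvg {I : Type} (G : set_system I) {PG : ProperFilter G} (z : I -> T) A B r :
  lo A <= r <= hi A -> z @ G --> gam (br A) r ->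
  (\forall i \near G, piece A (z i)) -> (\forall i \near G, addZ (piece B) (F (z i))) ->
  exists2 s, lo B <= s <= hi B &
    [/\ ell A = br B, F (gam (br A) r) = trans (pp A) (gam (br B) s) &
        \forall i \near G, piece B (trans (- pp A) (F (z i)))].
Proof.
move=> Ar zr evA evB.
have evAB : \forall i \near G, ell A = br B /\ piece B (trans (- pp A) (F (z i))).
  by apply: filterS2 evA evB => i; exact: piece_step.
have [_ [lB _]] := filter_ex evAB.
have Fzr : F \o z @ G --> F (gam (br A) r) by apply: continuous_cvg (@F_cont _) zr.
have [[s Is Es]|TRFr] := F_piece (ex_intro2 _ _ r Ar erefl); last first.
  have evTR := Fzr _ (open_nbhs_nbhs (conj (@open_interior _ _) TRFr)).
  have [i [/addZ_piece_XZ XFzi TRFzi]] := filter_ex (filterI evB evTR).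
  by case: (XZ_not_interior_TR lg dF XFzi).
have zs : trans (- pp A) \o (F \o z) @ G --> gam (ell A) s.
  by rewrite Es; apply: continuous_cvg Fzr; exact: trans_continuous.
have Bs : lo B <= s <= hi B.
  have := embedding_cvg_closed (gam_emb (ell A))
    (closed_segment (a := lo B) (b := hi B)) Is zs; apply.
  apply: filterS evAB => i [_ [u Bu uE]].
  by exists u; [split; [exact: piece_param_I01 Bu|]|rewrite lB].
exists s => //; split => //; last by apply: filterS evAB => i [].
by rewrite -lB Es -trans_add // subrr.
Qed.

Definition itin_params (As : nat -> P) (K : nat) : set R :=
  [set t | lo (As 0%N) <= t <= hi (As 0%N) /\ forall i, (i <= K)%N ->
     addZ (piece (As i)) (iter i F (gam (br (As 0%N)) t))].

Lemma closed_itin_params As K : closed (itin_params As K).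
Proof.
move=> t clCt; set C := itin_params As K in clCt *; set b0 := br (As 0%N).
have t0 : lo (As 0%N) <= t <= hi (As 0%N).
  by apply: closed_segment; apply: closureS clCt => x [].
have g0t : gam b0 @ within C (nbhs t) --> gam b0 t.
  move=> W /(embedding_nbhs (gam_emb b0) (piece_param_I01 t0)) [U Ut UW].
  by apply: filterS Ut => x Ux [Ix _]; exact: UW Ux (piece_param_I01 Ix).
suff orbit_near i : (i <= K)%N -> exists m r, lo (As i) <= r <= hi (As i) /\
    iter i F (gam b0 t) = trans m (gam (br (As i)) r) /\
    \forall x \near within C (nbhs t), piece (As i) (trans (- m) (iter i F (gam b0 x))).
  split => // i iK; have [m [r [Ir [-> _]]]] := orbit_near i iK.
  by exists m, (gam (br (As i)) r); split => //; exists r.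
elim: i => [_|i IH iK].
  exists 0, t; do 2 split => //.
  by apply: filterS (withinT _ _) => x [Ix _]; rewrite oppr0; exists x.
have [m [r [Ir [Ei evi]]]] := IH (ltnW iK).
pose z x := trans (- m) (iter i F (gam b0 x)).
have zr : z @ within C (nbhs t) --> gam (br (As i)) r.
  rewrite -(transK tauK tauinvK m (gam _ r)) -Ei.
  apply: (@continuous_cvg _ _ _ _ _ (iter i F \o gam b0) (trans (- m))).
    exact: trans_continuous.
  by apply: continuous_cvg g0t; exact: continuous_iter.
have evB : \forall x \near within C (nbhs t), addZ (piece (As i.+1)) (F (z x)).
  apply: filterS (withinT _ _) => x [_ Cx].
  by rewrite /z (trans_morph tauK tauinvK dF); apply: (addZ_trans tauK tauinvK); exact: Cx _ iK.
have [s Bs [lB EF evB']] := piece_step_cvg Ir zr evi evB.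
exists (m + pp (As i)), s; split => //; split.
  by rewrite iterS Ei (trans_morph tauK tauinvK dF) EF trans_add.
apply: filterS evB' => x; rewrite /z (trans_morph tauK tauinvK dF) -trans_add //.
by rewrite opprD addrC.
Qed.

Lemma cylinder_itin_params As n y : cylinder (mkseq As n.+1) y -> itin_params As n !=set0.
Proof.
move=> Cy; have := Cy 0%N (As 0%N); rewrite onth_mkseq => /(_ erefl) [m [_ [[u Au <-] /= ym]]].
have Cy' := cylinder_trans tauK tauinvK dF (- m) Cy.
exists u; split => // i iK; have := Cy' i (As i).
by rewrite onth_mkseq ltnS iK ym (transK tauK tauinvK) => /(_ erefl).
Qed.

Lemma exists_itinerary_point As k :
  (forall n, cylinder_image (mkseq As (n + k).+1) !=set0) ->
  exists x, Xinf h tau tauinv F x /\ itinerary tau tauinv F gam br lo hi x As.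
Proof.
move=> ne; set a := lo (As 0%N); set b := hi (As 0%N).
have decr : {homo itin_params As : m n / (m <= n)%N >-> n `<=` m}.
  by move=> m n mn t [At Ht]; split => // i im; apply: Ht; exact: leq_trans mn.
have [t Et] : \bigcap_n itin_params As n !=set0.
  have := compact_nested_closed (segment_compact (a := a) (b := b)) (@closed_itin_params As).
  apply => //.
    by move=> n t [abt _]; rewrite /= in_itv.
  move=> n; have [_ [y Cy _]] := ne n.
  by have [u /(decr _ _ (leq_addr k n)) En] := cylinder_itin_params Cy; exists u.
have itin : itinerary tau tauinv F gam br lo hi (gam (br (As 0%N)) t) As.
  by move=> n; have [_] := Et n I; exact.
exists (gam (br (As 0%N)) t); split => //; split.
  by have [abt _] := Et 0%N I; exact: piece_Xset (ex_intro2 _ _ t abt erefl).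
by move=> n; exact: addZ_piece_XZ (itin n).
Qed.

End Partition.

Theorem mainTheorem8 (R : realType) (T : topologicalType)
  (h : R -> T) (tau tauinv : T -> T) (F : T -> T)
  (L : finType) (gam : L -> R -> T)
  (P : finType) (br : P -> L) (lo hi : P -> R) (ell : P -> L) (pp : P -> int) :
  lifted_graph h tau tauinv ->
  continuous F ->
  degree_one tau F ->
  sun_like h F gam ->
  basic_partition h tau tauinv F gam br lo hi ell pp ->
  (forall (x : T) (As : nat -> P),
     Xinf h tau tauinv F x ->
     itinerary tau tauinv F gam br lo hi x As ->
     infinite_path h tau tauinv F gam br lo hi (fun n => wclass h tau tauinv F gam br lo hi (mkseq As n.+1)))
  /\
  (forall (a : nat -> set (seq P)) (k : nat),
     infinite_path h tau tauinv F gam br lo hi a ->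
     (exists w, a 0%N = wclass h tau tauinv F gam br lo hi w /\ height h tau tauinv F gam br lo hi w k) ->
     exists (x : T) (As : nat -> P),
       [/\ Xinf h tau tauinv F x,
           itinerary tau tauinv F gam br lo hi x As &
           forall n, a n = wclass h tau tauinv F gam br lo hi (mkseq As (n + k).+1)]).
Proof.
move=> lg F_cont dF sl bp; have [_ _ [[tauK tauinvK _ _] _] _ _] := lg.
split=> [x As|a k pa [w [a0 [i [iw [kE [w_sim _]]]]]]]; first exact: itinerary_infinite_path.
have sz : size (drop i w) = k.+1 by rewrite size_drop kE; lia.
have a0i : a 0%N = wclass h tau tauinv F gam br lo hi (drop i w).
  by rewrite a0; apply/eq_wclass/rst_step.
have sv : (0 < size (drop i w))%N by rewrite sz.
have [As aE] := infinite_path_words pa a0i sv.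
rewrite sz /= in aE.
have [x [Xx xAs]] := exists_itinerary_point lg F_cont dF sl bp
  (fun n => infinite_path_cylinder_image tauK tauinvK dF pa (aE n)).
by exists x, As.
Qed.
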